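(* The Petersen graph has, for no vertex $v$, two (nor three) level-disjoint partitions rooted in $v$ of optimal height, where optimal height for $k$ partitions in this non-bipartite graph means maximal height equal to $\mathrm{ecc}(v)+k-1=k+1$.
   Context: For $S\subseteq V(G)$, $N(S)$ is the set of vertices adjacent to some vertex of $S$. A level partition of $G$ is a tuple $\mathcal{S}=(S_0,\dots,S_h)$ of pairwise disjoint sets with union $V(G)$ such that $S_i\subseteq N(S_{i-1})$ for $1\le i\le h$; $h$ is its height; it is rooted in $v$ if $S_0=\{v\}$. Level partitions are level-disjoint if for every two of them $\mathcal{S},\mathcal{T}$, $S_i\cap T_i=\emptyset$ for every $1\le i\le\min$ of their heights. The Petersen graph is 3-regular, vertex-transitive, non-bipartite, of girth 5, with every vertex of eccentricity 2. *)

From mathcomp Require Import all_boot.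
Set Implicit Arguments. Unset Strict Implicit. Unset Printing Implicit Defensive.

(* The Petersen graph as the Kneser graph K(5,2): vertices are the 2-element
   subsets of {0,..,4}, adjacent iff disjoint. *)
Definition petersen_vertex := {A : {set 'I_5} | #|A| == 2}.

Definition petersen_adj : rel petersen_vertex :=
  fun x y => [disjoint val x & val y].

Definition nbhd (T : finType) (e : rel T) (S : {set T}) : {set T} :=
  [set x | [exists y in S, e y x]].

Definition height (T : finType) (S : seq {set T}) : nat := (size S).-1.

Definition level_partition (T : finType) (e : rel T) (S : seq {set T}) : Prop :=
  [/\ 0 < size S,
      (forall i j, i < j -> j < size S -> [disjoint nth set0 S i & nth set0 S j]),
      \bigcup_(A <- S) A = [set: T] &
      (forall i, 0 < i -> i < size S -> nth set0 S i \subset nbhd e (nth set0 S i.-1))].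

Definition rooted_in (T : finType) (S : seq {set T}) (v : T) : Prop :=
  nth set0 S 0 = [set v].

Definition level_disjoint (T : finType) (Ss : seq (seq {set T})) : Prop :=
  forall a b, a < b -> b < size Ss ->
    forall i, 1 <= i -> i <= minn (height (nth [::] Ss a)) (height (nth [::] Ss b)) ->
      [disjoint nth set0 (nth [::] Ss a) i & nth set0 (nth [::] Ss b) i].

From mathcomp Require Import all_boot zify.

(* Let S be a level partition rooted in v of a graph of girth at least 5.
   A neighbour y of v outside S_1 lies at level at least 4: at level 2 it
   would close a triangle through v, and at level 3 a 4-cycle through v
   unless its predecessor's predecessor were v itself, which sits at level 0.
   Given level-disjoint partitions rooted in v, a vertex of level 1 of one of
   them is such a neighbour for every other one.  With two partitions this
   forces a height of at least 4; with three, the other two partitions have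
   height at most 4, so the vertex lies at level 4 in both of them, against
   level-disjointness.  The Petersen graph K(5,2) has girth 5: the
   neighbours of x are the 2-subsets of the 3-point complement of x, any two
   of which meet and any two distinct of which cover it. *)

Section LevelPartition.

Context {T : finType} {e : rel T}.
Implicit Types (S : seq {set T}) (Ss : seq (seq {set T})) (x y z : T).

Lemma level_lt_size {S i x} : x \in nth set0 S i -> i < size S.
Proof. by case: ltnP => // ?; rewrite nth_default ?inE. Qed.

Lemma level_le_height {S i x} : x \in nth set0 S i -> i <= height S.
Proof. by move/level_lt_size; rewrite /height; lia. Qed.

Lemma level_disjoint_notin {Ss a b i x} : level_disjoint Ss ->
  a != b -> a < size Ss -> b < size Ss -> 0 < i ->
  x \in nth set0 (nth [::] Ss a) i -> x \notin nth set0 (nth [::] Ss b) i.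
Proof.
move=> disj ab a_lt b_lt i_gt0 xa; apply/negP => xb.
have le_min : i <= minn (height (nth [::] Ss a)) (height (nth [::] Ss b)).
  by rewrite leq_min (level_le_height xa) (level_le_height xb).
case: (ltngtP a b) ab => // [lt_ab|lt_ba] _.
- by have := disjointFr (disj _ _ lt_ab b_lt _ i_gt0 le_min) xa; rewrite xb.
- rewrite minnC in le_min.
  by have := disjointFr (disj _ _ lt_ba a_lt _ i_gt0 le_min) xb; rewrite xa.
Qed.

Context {S : seq {set T}} (lpS : level_partition e S).

Lemma level_partition_cover x : exists i, x \in nth set0 S i.
Proof.
case: lpS => _ _ cover _.
have : x \in \bigcup_(A <- S) A by rewrite cover inE.
elim: S {cover} => [|A S' IH]; first by rewrite big_nil inE.
by rewrite big_cons inE => /orP[xA|/IH [i xi]]; [exists 0 | exists i.+1].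
Qed.

Lemma level_index_unique {i j x} : x \in nth set0 S i -> x \in nth set0 S j -> i = j.
Proof.
case: lpS => _ disj _ _ xi xj.
case: (ltngtP i j) => // [ij|ji].
- by have := disjointFr (disj _ _ ij (level_lt_size xj)) xi; rewrite xj.
- by have := disjointFr (disj _ _ ji (level_lt_size xi)) xj; rewrite xi.
Qed.

Lemma level_pred {i x} : x \in nth set0 S i.+1 -> exists2 z, z \in nth set0 S i & e z x.
Proof.
case: lpS => _ _ _ nbS xi.
have := subsetP (nbS i.+1 isT (level_lt_size xi)) x xi.
by rewrite inE => /existsP [z /andP [zi zx]]; exists z.
Qed.

Lemma level1_nonempty {i x} : 0 < i -> x \in nth set0 S i -> exists z, z \in nth set0 S 1.
Proof.
elim: i x => [|[|i] IH] x // _ xi; first by exists x.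
by have [z zi _] := level_pred xi; apply: IH zi.
Qed.

Context {v : T} (rootS : rooted_in S v).

Lemma level0_root x : (x \in nth set0 S 0) = (x == v).
Proof. by rewrite rootS inE. Qed.

Lemma level1_adj_root {z} : z \in nth set0 S 1 -> e v z.
Proof. by case/level_pred => w; rewrite level0_root => /eqP ->. Qed.

End LevelPartition.

Section Girth5.

Context {T : finType} {e : rel T}.
Hypothesis e_irrefl : irreflexive e.
Hypothesis triangle_free : forall {x y z}, e x y -> e x z -> ~~ e y z.
Hypothesis square_free : forall {x y z w},
  e x y -> e x z -> e y w -> e w z -> y != z -> w = x.

Context {v : T}.
Hypothesis v_adj : exists y, e v y.

Section RootedPartition.

Context {S : seq {set T}} (lpS : level_partition e S) (rootS : rooted_in S v).

Lemma adj_root_level_ge4 {y i} : e v y -> y \in nth set0 S i ->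
  y \notin nth set0 S 1 -> 4 <= i.
Proof.
move=> vy yi y_not1.
case: i yi => [|[|[|[|i]]]] yi //.
- by move: yi; rewrite (level0_root rootS) => /eqP yv; rewrite yv e_irrefl in vy.
- by rewrite yi in y_not1.
- have [z z1 zy] := level_pred lpS yi.
  by move: (triangle_free (level1_adj_root lpS rootS z1) vy); rewrite zy.
- have [w w2 wy] := level_pred lpS yi.
  have [z z1 zw] := level_pred lpS w2.
  have zy : z != y by apply: contraNneq y_not1 => <-.
  have wv := square_free (level1_adj_root lpS rootS z1) vy zw wy zy.
  have w0 : w \in nth set0 S 0 by rewrite (level0_root rootS) wv.
  by have := level_index_unique lpS w2 w0.
Qed.

Lemma level1_exists : exists z, z \in nth set0 S 1.
Proof.
have [y vy] := v_adj; have [i yi] := level_partition_cover lpS y.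
have [y1|y_not1] := boolP (y \in nth set0 S 1); first by exists y.
apply: (level1_nonempty lpS _ yi).
by apply: leq_trans (adj_root_level_ge4 vy yi y_not1).
Qed.

End RootedPartition.

Context {Ss : seq (seq {set T})}.
Hypothesis Ss_rooted : forall S, S \in Ss -> level_partition e S /\ rooted_in S v.
Hypothesis Ss_disj : level_disjoint Ss.

Lemma level1_exists_nth b : b < size Ss -> exists y, y \in nth set0 (nth [::] Ss b) 1.
Proof.
by move=> b_lt; have [lpB rootB] := Ss_rooted _ (mem_nth [::] b_lt); apply: level1_exists.
Qed.

Lemma level1_elsewhere_ge4 {a b y} : a != b -> a < size Ss -> b < size Ss ->
  y \in nth set0 (nth [::] Ss b) 1 -> exists2 i, 4 <= i & y \in nth set0 (nth [::] Ss a) i.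
Proof.
move=> ab a_lt b_lt yb.
have [lpA rootA] := Ss_rooted _ (mem_nth [::] a_lt).
have [lpB rootB] := Ss_rooted _ (mem_nth [::] b_lt).
have [i yi] := level_partition_cover lpA y.
exists i => //; apply: (adj_root_level_ge4 lpA rootA (level1_adj_root lpB rootB yb) yi).
by apply: level_disjoint_notin yb; rewrite // eq_sym.
Qed.

End Girth5.

Lemma card_petersen_vertex (x : petersen_vertex) : #|val x| = 2.
Proof. exact/eqP/(valP x). Qed.

Lemma card_setC_petersen_vertex (x : petersen_vertex) : #|~: val x| = 3.
Proof. by have := cardsC (val x); rewrite card_ord card_petersen_vertex; lia. Qed.

Lemma petersen_adjE x y : petersen_adj x y = (val y \subset ~: val x).
Proof. by rewrite /petersen_adj disjoint_sym disjoints_subset. Qed.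

Lemma petersen_adj_irrefl : irreflexive petersen_adj.
Proof.
move=> x; apply/negP; rewrite /petersen_adj -setI_eq0 setIid => /eqP x0.
by have := card_petersen_vertex x; rewrite x0 cards0.
Qed.

Lemma petersen_adj_exists x : exists y, petersen_adj x y.
Proof.
have [i xi] : exists i, i \in ~: val x.
  by apply/set0Pn; rewrite -card_gt0 card_setC_petersen_vertex.
have card_y : #|~: val x :\ i| == 2.
  have := cardsD1 i (~: val x).
  by rewrite xi card_setC_petersen_vertex => card_x; apply/eqP; lia.
by exists (exist _ (~: val x :\ i) card_y); rewrite petersen_adjE subsetDl.
Qed.

Lemma petersen_triangle_free {x y z} :
  petersen_adj x y -> petersen_adj x z -> ~~ petersen_adj y z.
Proof.
rewrite !petersen_adjE => yx zx.
apply/negP; rewrite -disjoints_subset -setI_eq0 => /eqP zy0.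
have yz_sub : val y :|: val z \subset ~: val x by rewrite subUset yx zx.
move/subset_leq_card: yz_sub.
by rewrite cardsU setIC zy0 cards0 !card_petersen_vertex card_setC_petersen_vertex.
Qed.

Lemma petersen_square_free {x y z w} :
  petersen_adj x y -> petersen_adj x z -> petersen_adj y w -> petersen_adj w z ->
  y != z -> w = x.
Proof.
rewrite !petersen_adjE => yx zx wy zw yz.
have card_yz : #|val y :&: val z| <= 1.
  have : val y :&: val z \proper val y.
    rewrite properEneq subsetIl andbT; apply: contra yz => /eqP yzy.
    have sub_yz : val y \subset val z by rewrite -yzy subsetIr.
    by apply/eqP/val_inj/eqP; rewrite eqEcard sub_yz !card_petersen_vertex.
  by move/proper_card; rewrite card_petersen_vertex.
have yz_setC : val y :|: val z = ~: val x.
  apply/eqP; rewrite eqEcard subUset yx zx card_setC_petersen_vertex cardsU.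
  by rewrite !card_petersen_vertex; lia.
have wx : val w \subset val x.
  by rewrite -[val x]setCK -yz_setC setCU subsetI wy subsetC.
by apply/val_inj/eqP; rewrite eqEcard wx !card_petersen_vertex.
Qed.

Theorem mainTheorem8 :
  forall (v : petersen_vertex) (k : nat), (k = 2 \/ k = 3) ->
  forall Ss : seq (seq {set petersen_vertex}),
    size Ss = k ->
    (forall S, S \in Ss -> level_partition petersen_adj S /\ rooted_in S v) ->
    level_disjoint Ss ->
    \max_(S <- Ss) height S <> k.+1.
Proof.
move=> v k k23 Ss size_Ss Ss_rooted Ss_disj max_height.
have height_le a : a < k -> height (nth [::] Ss a) <= k.+1.
  by rewrite -max_height -size_Ss => a_lt; rewrite (leq_bigmax_seq _ (mem_nth _ a_lt)).
have level1 := level1_exists_nth petersen_adj_irrefl (@petersen_triangle_free)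
  (@petersen_square_free) (petersen_adj_exists v) Ss_rooted.
have deep := level1_elsewhere_ge4 petersen_adj_irrefl (@petersen_triangle_free)
  (@petersen_square_free) Ss_rooted Ss_disj.
rewrite size_Ss in level1 deep.
case: k23 => k_eq; rewrite k_eq in height_le level1 deep.
- have [y y1] := level1 1 isT.
  have [i i_ge4 yi] := deep 0 1 y isT isT isT y1.
  by have := leq_trans (level_le_height yi) (height_le 0 isT); lia.
- have [y y2] := level1 2 isT.
  have [i i_ge4 yi] := deep 0 2 y isT isT isT y2.
  have [j j_ge4 yj] := deep 1 2 y isT isT isT y2.
  have i4 : i = 4 by have := leq_trans (level_le_height yi) (height_le 0 isT); lia.
  have j4 : j = 4 by have := leq_trans (level_le_height yj) (height_le 1 isT); lia.
  subst i j.
  have := level_disjoint_notin Ss_disj (a := 0) (b := 1) (i := 4) (x := y) isT.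
  by rewrite size_Ss k_eq yj => /(_ isT isT isT yi).
Qed.
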